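(* Let $n\in\mathbb{N}$ and let $R$ be a $2n$-adically closed ring. If $p,q$ are prime ideals of $R$ (not necessarily distinct), then either $p+q=R$ or $p+q$ is a prime ideal.
   Context: All rings are commutative with $1$; $\mathbb{N}=\{1,2,\dots\}$. A ring $R$ is $k$-adically closed if every monic polynomial of degree $k$ with coefficients in $R$ has a root in $R$. *)

From HB Require Import structures.
From mathcomp Require Import all_boot all_order all_algebra.
Set Implicit Arguments. Unset Strict Implicit. Unset Printing Implicit Defensive.
Import GRing.Theory.
Local Open Scope ring_scope.

Definition is_ideal (R : comNzRingType) (I : R -> Prop) : Prop :=
  [/\ I 0,
      (forall x y, I x -> I y -> I (x + y)),
      (forall x, I x -> I (- x)) &
      (forall r x, I x -> I (r * x))].

Definition is_prime_ideal (R : comNzRingType) (I : R -> Prop) : Prop :=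
  [/\ is_ideal I, ~ I 1 &
      (forall x y, I (x * y) -> I x \/ I y)].

Definition ideal_add (R : comNzRingType) (p q : R -> Prop) : R -> Prop :=
  fun x => exists a b, [/\ p a, q b & x = a + b].

Definition adically_closed (k : nat) (R : comNzRingType) : Prop :=
  forall P : {poly R}, P \is monic -> size P = k.+1 -> exists x : R, root P x.

From HB Require Import structures.
From mathcomp Require Import all_boot all_order all_algebra.
From mathcomp Require Import ring.
From Stdlib Require Import Classical.
Set Implicit Arguments. Unset Strict Implicit. Unset Printing Implicit Defensive.
Local Open Scope ring_scope.
Import GRing.Theory.

(* The idea is to split the
   product ab using a root y of the quadratic  Y^2 - (a + b) Y + s:
     y (y - (a + b)) = -s          lies in p,
     (y - a)(y - b)  = ab - s = t  lies in q,
   so primality puts one factor of each product in p resp. q, and in each of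
   the four cases a or b is written as an element of p plus one of q.

   The root y exists because R is 2-adically closed: a (k n)-adically closed
   ring is k-adically closed for n > 0, since a root x of P(X^n) gives the
   root x^n of P.  The file proves, in order: this descent of adic closure,
   the resulting quadratic roots, the ideal properties of p + q, the
   splitting argument above, and finally the theorem. *)

Section AdicClosure.
Variable R : comNzRingType.

Lemma monic_comp_Xn (P : {poly R}) (k n : nat) :
  (0 < n)%N -> P \is monic -> size P = k.+1 ->
  (P \Po 'X^n) \is monic /\ size (P \Po 'X^n) = (k * n).+1.
Proof.
move=> n_gt0 monP sizeP.
have top_coef : (P \Po 'X^n)`_(k * n) = 1.
  rewrite comp_poly_Xn // coef_poly sizeP ltn_pmul2r // ltnSn dvdn_mull //.
  by rewrite mulnK // -[k]/(k.+1.-1) -sizeP -lead_coefE (monicP monP).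
have size_le : (size (P \Po 'X^n) <= (k * n).+1)%N.
  by apply: leq_trans (size_comp_poly_leq _ _) _; rewrite sizeP size_polyXn.
have size_eq : size (P \Po 'X^n) = (k * n).+1.
  apply/eqP; rewrite eqn_leq size_le /= ltnNge; apply/negP => /(nth_default 0).
  by rewrite top_coef; apply/eqP; rewrite oner_neq0.
by rewrite monicE lead_coefE size_eq top_coef.
Qed.

Lemma adically_closed_factor (k n : nat) :
  (0 < n)%N -> adically_closed (k * n) R -> adically_closed k R.
Proof.
move=> n_gt0 closed P monP sizeP.
have [monQ sizeQ] := monic_comp_Xn n_gt0 monP sizeP.
have [x /rootP rootQ] := closed _ monQ sizeQ.
by exists (x ^+ n); apply/rootP; rewrite -rootQ horner_comp hornerXn.
Qed.

Lemma quadratic_root (c s : R) :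
  adically_closed 2 R -> exists y : R, y * y - c * y + s = 0.
Proof.
move=> closed.
have low_size : (size (- (c *: 'X) + s%:P : {poly R})%R < size ('X^2 : {poly R}))%N.
  rewrite size_polyXn; apply: (leq_ltn_trans (size_polyD _ _)); rewrite gtn_max.
  rewrite size_polyC (leq_ltn_trans (leq_b1 _)) // andbT.
  by rewrite size_polyN (leq_ltn_trans (size_scale_leq _ _)) // size_polyX.
have sizeQ : size ('X^2 - c *: 'X + s%:P : {poly R}) = 3%N.
  by rewrite -addrA size_polyDl // size_polyXn.
have monQ : ('X^2 - c *: 'X + s%:P : {poly R}) \is monic.
  by rewrite monicE -addrA lead_coefDl // lead_coefXn.
have [y /rootP rootQ] := closed _ monQ sizeQ.
by exists y; rewrite -rootQ !hornerE expr2.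
Qed.

End AdicClosure.

Section IdealSum.
Variables (R : comNzRingType) (p q : R -> Prop).
Hypotheses (idp : is_ideal p) (idq : is_ideal q).

Lemma ideal_add_is_ideal : is_ideal (ideal_add p q).
Proof.
case: idp => p0 pD pN pM; case: idq => q0 qD qN qM.
split.
- by exists 0, 0; rewrite addr0.
- move=> _ _ [a [b [pa qb ->]]] [a' [b' [pa' qb' ->]]].
  by exists (a + a'), (b + b'); split; [exact: pD | exact: qD | ring].
- move=> _ [a [b [pa qb ->]]].
  by exists (- a), (- b); split; [exact: pN | exact: qN | ring].
- move=> r _ [a [b [pa qb ->]]].
  by exists (r * a), (r * b); split; [exact: pM | exact: qM | ring].
Qed.

Lemma ideal_add_full : ideal_add p q 1 -> forall x : R, ideal_add p q x.
Proof.
have [_ _ _ absorb] := ideal_add_is_ideal.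
by move=> one x; rewrite -[x]mulr1; exact: absorb.
Qed.

End IdealSum.

Lemma prime_sum_split (R : comNzRingType) (p q : R -> Prop) (a b s t y : R) :
  is_prime_ideal p -> is_prime_ideal q -> p s -> q t -> a * b = s + t ->
  y * y - (a + b) * y + s = 0 ->
  ideal_add p q a \/ ideal_add p q b.
Proof.
move=> [[_ _ pN _] _ pP] [[_ _ qN _] _ qP] ps qt ab_eq root_y.
have in_p : p (y * (y - (a + b))).
  have -> : y * (y - (a + b)) = (y * y - (a + b) * y + s) - s by ring.
  by rewrite root_y sub0r; exact: pN.
have in_q : q ((y - a) * (y - b)).
  have -> : (y - a) * (y - b) = (y * y - (a + b) * y + s) + (a * b - s) by ring.
  by rewrite root_y add0r ab_eq addrC addKr.
case: (pP _ _ in_p) => [py | pyab]; case: (qP _ _ in_q) => [qya | qyb].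
- by left; exists y, (- (y - a)); split; [| exact: qN | ring].
- by right; exists y, (- (y - b)); split; [| exact: qN | ring].
- by right; exists (- (y - (a + b))), (y - a); split; [exact: pN | | ring].
- by left; exists (- (y - (a + b))), (y - b); split; [exact: pN | | ring].
Qed.

Theorem mainTheorem3 (n : nat) (R : comNzRingType) (p q : R -> Prop) :
  (0 < n)%N -> adically_closed (2 * n) R ->
  is_prime_ideal p -> is_prime_ideal q ->
  (forall x : R, ideal_add p q x) \/ is_prime_ideal (ideal_add p q).
Proof.
move=> n_gt0 closed prime_p prime_q.
have closed2 : adically_closed 2 R := adically_closed_factor n_gt0 closed.
have [idp _ _] := prime_p; have [idq _ _] := prime_q.
case: (classic (ideal_add p q 1)) => [one | not_one].
  by left; exact: ideal_add_full.
right; split; [exact: ideal_add_is_ideal | exact: not_one |].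
move=> a b [s [t [ps qt ab_eq]]].
have [y root_y] := quadratic_root (a + b) s closed2.
exact: prime_sum_split prime_p prime_q ps qt ab_eq root_y.
Qed.
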